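(* If $K\subseteq L\subseteq M$ are finite extensions inside $\bar K$, then $t_K(L)\mid t_K(M)$.
   Context: $K$ is a perfect field with a fixed algebraic closure $\bar K$. For a finite extension $P/K$, the ascending index $t_K(P)=[F:K]$, where $F$ is the unique subfield of $P$ that is Galois over $K$ of maximum possible degree. *)

From HB Require Import structures.
From mathcomp Require Import all_boot all_order all_algebra all_field.
Set Implicit Arguments. Unset Strict Implicit. Unset Printing Implicit Defensive.
Import GRing.Theory.
Local Open Scope ring_scope.

Definition perfect_field (F : fieldType) : Prop :=
  forall p : nat, p \in [pchar F] -> forall x : F, exists y : F, y ^+ p = x.

(* Inside a finite normal extension L0 of the base field K (standing in for
   the relevant finite part of the algebraic closure), E is "the" subfield of P
   that is Galois over K of maximum possible degree. *)
Definition max_galois_sub (K : fieldType) (L0 : splittingFieldType K)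
    (P E : {subfield L0}) : Prop :=
  [/\ (E <= P)%VS, galois 1%VS E &
      forall E' : {subfield L0}, (E' <= P)%VS -> galois 1%VS E' ->
        (\dim E' <= \dim E)%N].

(* t_K(P) = [E : K] for such E; note \dim E is the K-dimension, [E:K]. *)

From HB Require Import structures.
From mathcomp Require Import all_boot all_order all_algebra all_field.
Set Implicit Arguments. Unset Strict Implicit. Unset Printing Implicit Defensive.

(* The compositum of two Galois extensions of K inside L0 is again Galois
   over K, so a subfield P has a largest Galois subextension F, containing
   every other one.  For L <= M this gives F_L <= F_M, and the tower law
   turns the inclusion into divisibility of the degrees. *)

Section GaloisCompositum.

Variables (F0 : fieldType) (L : splittingFieldType F0).
Implicit Types K E F : {subfield L}.

Lemma prodv_adjoin_vbasis E F : (E * F)%VS = <<E & vbasis F>>%VS.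
Proof.
have sFEF : (F <= <<E & vbasis F>>)%VS.
  rewrite -[F in (F <= _)%VS](span_basis (vbasisP F)).
  by apply/span_subvP=> x /seqv_sub_adjoin.
apply/eqP; rewrite eqEsubv prodv_sub ?subv_adjoin_seq //=.
apply/Fadjoin_seqP; split=> [|x /vbasis_mem Fx]; first exact: field_subvMr.
exact: subvP (field_subvMl E F) x Fx.
Qed.

Lemma separable_prodv K E F :
  (K <= E)%VS -> separable K E -> separable K F -> separable K (E * F).
Proof.
move=> sKE sepKE /separableP sepKF; rewrite prodv_adjoin_vbasis.
apply: separable_trans sepKE _; apply: separable_Fadjoin_seq.
by apply/allP=> x /vbasis_mem/sepKF; apply: separable_elementS.
Qed.

Lemma normalField_prodv K E F :
  normalField K E -> normalField K F -> normalField K (E * F).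
Proof.
move=> /forall_inP nKE /forall_inP nKF; apply/forall_inP=> x Kx.
by rewrite aimgM (eqP (nKE x Kx)) (eqP (nKF x Kx)).
Qed.

Lemma galois_prodv K E F : galois K E -> galois K F -> galois K (E * F).
Proof.
move=> /and3P[sKE sepKE nKE] /and3P[_ sepKF nKF]; apply/and3P; split.
- exact: subv_trans sKE (field_subvMr E F).
- exact: separable_prodv.
- exact: normalField_prodv.
Qed.

Lemma max_galois_sub_maximal P F E :
  max_galois_sub P F -> (E <= P)%VS -> galois 1%VS E -> (E <= F)%VS.
Proof.
move=> [sFP gF maxF] sEP gE.
have dimFE : (\dim (F * E)%AS <= \dim F)%N.
  by apply: maxF; [rewrite prodv_sub | apply: galois_prodv].
have/eqP defFE : (F == F * E :> {vspace L})%VS by rewrite eqEdim field_subvMr.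
by rewrite defFE field_subvMl.
Qed.

End GaloisCompositum.

Theorem proposition9p1 (K : fieldType) (HK : perfect_field K)
    (L0 : splittingFieldType K) (L M FL FM : {subfield L0}) :
  (L <= M)%VS ->
  max_galois_sub L FL -> max_galois_sub M FM ->
  (\dim FL %| \dim FM)%N.
Proof.
move=> sLM [sFLL gFL _] maxFM.
apply/field_dimS/(max_galois_sub_maximal maxFM _ gFL).
exact: subv_trans sFLL sLM.
Qed.
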